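(* The cut rule is admissible in ${\sf GWF^s_{N_2}}$: for all $D,Z\in{\sf Frm_2}$ and finite multisets $\Gamma,\Gamma'$ of ${\sf Frm_2}$-formulas, if $\Gamma\Rightarrow D$ and $D,\Gamma'\Rightarrow Z$ are derivable in ${\sf GWF^s_{N_2}}$, then $\Gamma,\Gamma'\Rightarrow Z$ is derivable in ${\sf GWF^s_{N_2}}$.
   Context: Language: countably many atoms $p,q,\dots$, the constant $\bot$, and binary connectives $\wedge,\vee,\rightarrow$ ($\rightarrow$ is strict implication). ${\sf Frm}$ is the set of formulas built from atoms and $\bot$ with $\wedge,\vee,\rightarrow$; $A,B,C,D$ range over ${\sf Frm}$. Let $\supset$ be a new binary symbol (material implication) and ${\sf Frm_1}={\sf Frm}\cup\{A\supset B : A,B\in{\sf Frm}\}$ (no nesting of $\supset$). ${\sf Frm_2}$ is the smallest set containing ${\sf Frm_1}$ and closed under $\wedge$ and $\vee$; $X,Y,Z$ range over ${\sf Frm_2}$. A single-succedent sequent is $\Gamma\Rightarrow Z$ with $\Gamma$ a finite multiset of ${\sf Frm_2}$-formulas and $Z\in{\sf Frm_2}$. The calculus ${\sf GWF^s_{N_2}}$ has initial sequents $(id^s)$ $p,\Gamma\Rightarrow p$ ($p$ an atom) and $(L^s_\bot)$ $\bot,\Gamma\Rightarrow Z$, and rules (premises / conclusion): $(L^s_\wedge)$ $X,Y,\Gamma\Rightarrow Z$ / $X\wedge Y,\Gamma\Rightarrow Z$; $(R^s_\wedge)$ $\Gamma\Rightarrow X$ and $\Gamma\Rightarrow Y$ /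 $\Gamma\Rightarrow X\wedge Y$; $(L^s_\vee)$ $X,\Gamma\Rightarrow Z$ and $Y,\Gamma\Rightarrow Z$ / $X\vee Y,\Gamma\Rightarrow Z$; $(R^s_{\vee_l})$ $\Gamma\Rightarrow X$ / $\Gamma\Rightarrow X\vee Y$; $(R^s_{\vee_r})$ $\Gamma\Rightarrow Y$ / $\Gamma\Rightarrow X\vee Y$; $(L^s_\supset)$ $A\supset B,\Gamma\Rightarrow A$ and $B,\Gamma\Rightarrow Z$ / $A\supset B,\Gamma\Rightarrow Z$; $(R^s_\supset)$ $A,\Gamma\Rightarrow B$ / $\Gamma\Rightarrow A\supset B$; $(LR^s_\rightarrow)$ $C\supset D,A\Rightarrow B$ / $\Gamma,C\rightarrow D\Rightarrow A\rightarrow B$; $(R^s_\rightarrow)$ $A\Rightarrow B$ / $\Gamma\Rightarrow A\rightarrow B$. Here $A,B,C,D\in{\sf Frm}$, $X,Y,Z\in{\sf Frm_2}$, $\Gamma$ an arbitrary finite multiset of ${\sf Frm_2}$-formulas. *)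

From Stdlib Require Import List Permutation.
Import ListNotations.

(* Frm: atoms, bot, /\, \/, strict implication -> *)
Inductive frm : Type :=
| FAtom : nat -> frm
| FBot : frm
| FAnd : frm -> frm -> frm
| FOr : frm -> frm -> frm
| FImp : frm -> frm -> frm.

(* Frm_2, represented canonically: Frm_2 is generated from Frm_1 = Frm u {A ⊃ B}
   by /\ and \/. *)
Inductive frm2 : Type :=
| Atom : nat -> frm2
| Bot : frm2
| SImp : frm -> frm -> frm2
| MImp : frm -> frm -> frm2
| And2 : frm2 -> frm2 -> frm2
| Or2 : frm2 -> frm2 -> frm2.

Fixpoint emb (A : frm) : frm2 :=
  match A with
  | FAtom p => Atom p
  | FBot => Bot
  | FAnd A B => And2 (emb A) (emb B)
  | FOr A B => Or2 (emb A) (emb B)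
  | FImp A B => SImp A B
  end.

(* Antecedents are finite multisets, represented as lists up to permutation:
   each rule's conclusion may be any permutation of the displayed antecedent. *)
Inductive der : list frm2 -> frm2 -> Prop :=
| d_id : forall p G D, Permutation D (Atom p :: G) -> der D (Atom p)
| d_Lbot : forall G D Z, Permutation D (Bot :: G) -> der D Z
| d_Land : forall X Y G D Z, Permutation D (And2 X Y :: G) ->
    der (X :: Y :: G) Z -> der D Z
| d_Rand : forall G X Y, der G X -> der G Y -> der G (And2 X Y)
| d_Lor : forall X Y G D Z, Permutation D (Or2 X Y :: G) ->
    der (X :: G) Z -> der (Y :: G) Z -> der D Z
| d_Rorl : forall G X Y, der G X -> der G (Or2 X Y)
| d_Rorr : forall G X Y, der G Y -> der G (Or2 X Y)
| d_Lmimp : forall A B G D Z, Permutation D (MImp A B :: G) ->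
    der (MImp A B :: G) (emb A) -> der (emb B :: G) Z -> der D Z
| d_Rmimp : forall A B G, der (emb A :: G) (emb B) -> der G (MImp A B)
| d_LRsimp : forall A B C E G D, Permutation D (SImp C E :: G) ->
    der [MImp C E; emb A] (emb B) -> der D (SImp A B)
| d_Rsimp : forall A B G, der [emb A] (emb B) -> der G (SImp A B).

(** Gentzen's argument.  Exchange and weakening hold outright, and the left
    rules for [/\], [\/] and the right premise of the left rule for [⊃] are
    invertible, which gives contraction by induction on the weight of the
    contracted formula.  Cut is eliminated by induction on the weight of the
    cut formula and, inside that, on the left and then the right derivation.
    The only unusual principal case is a strict implication [A -> B]: the
    premises [C ⊃ E, A => B] of [LR->] and [A => B] of [R->] have fixed
    contexts, so the left premise yields [C ⊃ E => A ⊃ B] resp.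
    [ => A ⊃ B], and the cut is replaced by one on the lighter formula
    [A ⊃ B]. *)
From Stdlib Require Import List Permutation Lia PeanoNat Wf_nat.
Import ListNotations.

Definition frm_eq_dec : forall x y : frm, {x = y} + {x <> y}.
Proof. decide equality; apply Nat.eq_dec. Qed.

Definition frm2_eq_dec : forall x y : frm2, {x = y} + {x <> y}.
Proof. decide equality; try apply frm_eq_dec; apply Nat.eq_dec. Qed.

(* Permutation and membership goals are decided by comparing occurrence
   counts of an arbitrary formula [y], with every permutation hypothesis
   turned into an equation between counts; this relies on [frm2_eq_dec]
   being opaque, so that [simpl] leaves its applications to [destruct]. *)
Ltac count_occ_solve y :=
  repeat match goal with H : Permutation _ _ |- _ =>
    let h := fresh "h" in
    pose proof (proj1 (Permutation_count_occ frm2_eq_dec _ _) H y) as h; clear H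
  end;
  do 3 (repeat rewrite count_occ_app in *; simpl count_occ in * );
  repeat match goal with
  | |- context [frm2_eq_dec ?a ?b] => destruct (frm2_eq_dec a b)
  | H : context [frm2_eq_dec ?a ?b] |- _ => destruct (frm2_eq_dec a b)
  end;
  first [lia | congruence].

Ltac perm_solve :=
  apply (Permutation_count_occ frm2_eq_dec);
  let y := fresh "y" in intro y; count_occ_solve y.

Ltac in_solve :=
  match goal with |- In ?a ?l =>
    apply (count_occ_In frm2_eq_dec); count_occ_solve a end.

Lemma Permutation_cons_cases (L : list frm2) a l b m :
  Permutation L (a :: l) -> Permutation L (b :: m) ->
  (a = b /\ Permutation l m) \/
  exists k, Permutation l (b :: k) /\ Permutation m (a :: k).
Proof.
  intros Ha Hb.
  assert (Hab : Permutation (a :: l) (b :: m))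
    by (eapply Permutation_trans; [apply Permutation_sym, Ha | exact Hb]).
  assert (Hin : In b (a :: l))
    by (apply (Permutation_in b (Permutation_sym Hab)); left; reflexivity).
  destruct Hin as [<- | Hin].
  - left; split; [reflexivity | eapply Permutation_cons_inv; eauto].
  - right. apply in_split in Hin as [l1 [l2 ->]].
    exists (l1 ++ l2); split; perm_solve.
Qed.

Lemma Permutation_cons2_cases (L : list frm2) P l A m :
  Permutation L (P :: l) -> Permutation L (A :: A :: m) ->
  (P = A /\ Permutation l (A :: m)) \/
  exists k, Permutation m (P :: k) /\ Permutation l (A :: A :: k).
Proof.
  intros HP HA.
  destruct (Permutation_cons_cases _ _ _ _ _ HP HA) as [[-> Hl] | [k [Hl Hm]]].
  - left; split; auto.
  - destruct (Permutation_cons_cases _ _ _ _ _ (Permutation_refl (A :: m)) Hm)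
      as [[-> Hmk] | [k' [Hm' Hk]]].
    + left; split; [reflexivity | perm_solve].
    + right; exists k'; split; [exact Hm' | perm_solve].
Qed.

Lemma der_Permutation G Z : der G Z -> forall G', Permutation G G' -> der G' Z.
Proof.
  induction 1; intros G' HG;
    try (econstructor; [eapply Permutation_trans; [apply Permutation_sym, HG | eassumption] | ..]);
    eauto using der.
Qed.

Lemma der_weaken G Z : der G Z -> forall W, der (W :: G) Z.
Proof.
  induction 1; intros W.
  - apply d_id with (W :: G); perm_solve.
  - apply d_Lbot with (W :: G); perm_solve.
  - apply d_Land with X Y (W :: G); [perm_solve |].
    apply der_Permutation with (W :: X :: Y :: G); auto; perm_solve.
  - apply d_Rand; auto.
  - apply d_Lor with X Y (W :: G); [perm_solve | |].
    + apply der_Permutation with (W :: X :: G); auto; perm_solve.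
    + apply der_Permutation with (W :: Y :: G); auto; perm_solve.
  - apply d_Rorl; auto.
  - apply d_Rorr; auto.
  - apply d_Lmimp with A B (W :: G); [perm_solve | |].
    + apply der_Permutation with (W :: MImp A B :: G); auto; perm_solve.
    + apply der_Permutation with (W :: emb B :: G); auto; perm_solve.
  - apply d_Rmimp, der_Permutation with (W :: emb A :: G); auto; perm_solve.
  - apply d_LRsimp with C E (W :: G); [perm_solve | assumption].
  - apply d_Rsimp; assumption.
Qed.

Lemma der_weaken_app_l G Z : der G Z -> forall L, der (L ++ G) Z.
Proof. intros H L; induction L; simpl; auto using der_weaken. Qed.

Lemma der_weaken_app_r G Z : der G Z -> forall L, der (G ++ L) Z.
Proof.
  intros H L. apply der_Permutation with (L ++ G);
    [apply der_weaken_app_l, H | apply Permutation_app_comm].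
Qed.

Lemma der_id_in p G : In (Atom p) G -> der G (Atom p).
Proof.
  intros H; apply in_split in H as [l1 [l2 ->]].
  apply d_id with (l1 ++ l2); perm_solve.
Qed.

Lemma der_Lbot_in G Z : In Bot G -> der G Z.
Proof.
  intros H; apply in_split in H as [l1 [l2 ->]].
  apply d_Lbot with (l1 ++ l2); perm_solve.
Qed.

Lemma der_LRsimp_in A B C E G :
  In (SImp C E) G -> der [MImp C E; emb A] (emb B) -> der G (SImp A B).
Proof.
  intros H Hd; apply in_split in H as [l1 [l2 ->]].
  apply d_LRsimp with C E (l1 ++ l2); [perm_solve | exact Hd].
Qed.

(* The antecedent extensions of the premises of an invertible left rule with
   principal formula [P]; for [⊃] only the right premise is invertible. *)
Definition left_premises (P : frm2) : list (list frm2) :=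
  match P with
  | And2 X Y => [[X; Y]]
  | Or2 X Y => [[X]; [Y]]
  | MImp _ B => [[emb B]]
  | _ => []
  end.

Lemma der_left_invertible H Z : der H Z -> forall P G Q,
  Permutation H (P :: G) -> In Q (left_premises P) -> der (Q ++ G) Z.
Proof.
  induction 1 as [p G0 D0 HP | G0 D0 Z0 HP | X Y G0 D0 Z0 HP Hd IH
    | G0 X Y Hd1 IH1 Hd2 IH2 | X Y G0 D0 Z0 HP Hd1 IH1 Hd2 IH2 | G0 X Y Hd IH
    | G0 X Y Hd IH | A B G0 D0 Z0 HP Hd1 IH1 Hd2 IH2 | A B G0 Hd IH
    | A B C E G0 D0 HP Hd | A B G0 Hd];
    intros P G1 Q Hp HQ.
  - destruct (frm2_eq_dec P (Atom p)) as [-> | ne]; [destruct HQ |].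
    apply der_id_in; in_solve.
  - destruct (frm2_eq_dec P Bot) as [-> | ne]; [destruct HQ |].
    apply der_Lbot_in; in_solve.
  - destruct (Permutation_cons_cases _ _ _ _ _ HP Hp) as [[<- Hq] | [k [H1 H2]]].
    + destruct HQ as [<- | []]. apply (der_Permutation _ _ Hd); perm_solve.
    + apply d_Land with X Y (Q ++ k); [perm_solve |].
      apply der_Permutation with (Q ++ X :: Y :: k); [apply (IH P) | ]; auto; perm_solve.
  - apply d_Rand; eauto.
  - destruct (Permutation_cons_cases _ _ _ _ _ HP Hp) as [[<- Hq] | [k [H1 H2]]].
    + destruct HQ as [<- | [<- | []]].
      * apply (der_Permutation _ _ Hd1); perm_solve.
      * apply (der_Permutation _ _ Hd2); perm_solve.
    + apply d_Lor with X Y (Q ++ k); [perm_solve | |].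
      * apply der_Permutation with (Q ++ X :: k); [apply (IH1 P) | ]; auto; perm_solve.
      * apply der_Permutation with (Q ++ Y :: k); [apply (IH2 P) | ]; auto; perm_solve.
  - apply d_Rorl; eauto.
  - apply d_Rorr; eauto.
  - destruct (Permutation_cons_cases _ _ _ _ _ HP Hp) as [[<- Hq] | [k [H1 H2]]].
    + destruct HQ as [<- | []]. apply (der_Permutation _ _ Hd2); perm_solve.
    + apply d_Lmimp with A B (Q ++ k); [perm_solve | |].
      * apply der_Permutation with (Q ++ MImp A B :: k); [apply (IH1 P) | ]; auto; perm_solve.
      * apply der_Permutation with (Q ++ emb B :: k); [apply (IH2 P) | ]; auto; perm_solve.
  - apply d_Rmimp.
    apply der_Permutation with (Q ++ emb A :: G1); [apply (IH P) | ]; auto; perm_solve.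
  - destruct (frm2_eq_dec P (SImp C E)) as [-> | ne]; [destruct HQ |].
    apply der_LRsimp_in with C E; [in_solve | exact Hd].
  - apply d_Rsimp; exact Hd.
Qed.

Lemma der_Land_inv X Y G Z : der (And2 X Y :: G) Z -> der (X :: Y :: G) Z.
Proof. intros H. apply (der_left_invertible _ _ H (And2 X Y) G [X; Y]); simpl; auto. Qed.

Lemma der_Lor_inv_l X Y G Z : der (Or2 X Y :: G) Z -> der (X :: G) Z.
Proof. intros H. apply (der_left_invertible _ _ H (Or2 X Y) G [X]); simpl; auto. Qed.

Lemma der_Lor_inv_r X Y G Z : der (Or2 X Y :: G) Z -> der (Y :: G) Z.
Proof. intros H. apply (der_left_invertible _ _ H (Or2 X Y) G [Y]); simpl; auto. Qed.

Lemma der_Lmimp_inv A B G Z : der (MImp A B :: G) Z -> der (emb B :: G) Z.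
Proof. intros H. apply (der_left_invertible _ _ H (MImp A B) G [emb B]); simpl; auto. Qed.

Fixpoint frm_weight (A : frm) : nat :=
  match A with
  | FAtom _ | FBot => 1
  | FAnd A B | FOr A B => frm_weight A + frm_weight B + 1
  | FImp A B => frm_weight A + frm_weight B + 2
  end.

(* [A -> B] must weigh more than [A ⊃ B]; see the last two cases of [cut_step]. *)
Fixpoint weight (X : frm2) : nat :=
  match X with
  | Atom _ | Bot => 1
  | SImp A B => frm_weight A + frm_weight B + 2
  | MImp A B => frm_weight A + frm_weight B + 1
  | And2 X Y | Or2 X Y => weight X + weight Y + 1
  end.

Lemma weight_emb A : weight (emb A) = frm_weight A.
Proof. induction A; simpl; auto. Qed.

Section Contraction.

Variable A : frm2.
Hypothesis contraction_lighter : forall A', weight A' < weight A ->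
  forall G Z, der (A' :: A' :: G) Z -> der (A' :: G) Z.

Lemma der_contraction_step H Z : der H Z ->
  forall G, Permutation H (A :: A :: G) -> der (A :: G) Z.
Proof.
  induction 1 as [p G0 D0 HP | G0 D0 Z0 HP | X Y G0 D0 Z0 HP Hd IH
    | G0 X Y Hd1 IH1 Hd2 IH2 | X Y G0 D0 Z0 HP Hd1 IH1 Hd2 IH2 | G0 X Y Hd IH
    | G0 X Y Hd IH | A' B' G0 D0 Z0 HP Hd1 IH1 Hd2 IH2 | A' B' G0 Hd IH
    | A' B' C E G0 D0 HP Hd | A' B' G0 Hd];
    intros G1 Hp.
  - apply der_id_in; in_solve.
  - apply der_Lbot_in; in_solve.
  - destruct (Permutation_cons2_cases _ _ _ _ _ HP Hp) as [[<- Hq] | [k [H1 H2]]].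
    + simpl in contraction_lighter.
      apply d_Land with X Y G1; [apply Permutation_refl |].
      assert (h1 : der (X :: X :: Y :: Y :: G1) Z0).
      { apply der_Permutation with (X :: Y :: X :: Y :: G1); [| perm_solve].
        apply der_Land_inv, (der_Permutation _ _ Hd); perm_solve. }
      apply contraction_lighter in h1; [| lia].
      assert (h2 : der (Y :: Y :: X :: G1) Z0) by (apply (der_Permutation _ _ h1); perm_solve).
      apply contraction_lighter in h2; [| lia].
      apply (der_Permutation _ _ h2); perm_solve.
    + apply d_Land with X Y (A :: k); [perm_solve |].
      apply der_Permutation with (A :: X :: Y :: k); [apply IH | ]; perm_solve.
  - apply d_Rand; auto.
  - destruct (Permutation_cons2_cases _ _ _ _ _ HP Hp) as [[<- Hq] | [k [H1 H2]]].
    + simpl in contraction_lighter.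
      apply d_Lor with X Y G1; [apply Permutation_refl | |]; apply contraction_lighter; try lia.
      * apply der_Lor_inv_l with Y, (der_Permutation _ _ Hd1); perm_solve.
      * apply der_Lor_inv_r with X, (der_Permutation _ _ Hd2); perm_solve.
    + apply d_Lor with X Y (A :: k); [perm_solve | |].
      * apply der_Permutation with (A :: X :: k); [apply IH1 | ]; perm_solve.
      * apply der_Permutation with (A :: Y :: k); [apply IH2 | ]; perm_solve.
  - apply d_Rorl; auto.
  - apply d_Rorr; auto.
  - destruct (Permutation_cons2_cases _ _ _ _ _ HP Hp) as [[<- Hq] | [k [H1 H2]]].
    + simpl in contraction_lighter.
      apply d_Lmimp with A' B' G1; [apply Permutation_refl | apply IH1; perm_solve |].
      apply contraction_lighter; [rewrite weight_emb; lia |].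
      apply der_Lmimp_inv with A', (der_Permutation _ _ Hd2); perm_solve.
    + apply d_Lmimp with A' B' (A :: k); [perm_solve | |].
      * apply der_Permutation with (A :: MImp A' B' :: k); [apply IH1 | ]; perm_solve.
      * apply der_Permutation with (A :: emb B' :: k); [apply IH2 | ]; perm_solve.
  - apply d_Rmimp, der_Permutation with (A :: emb A' :: G1); [apply IH | ]; perm_solve.
  - apply der_LRsimp_in with C E; [in_solve | exact Hd].
  - apply d_Rsimp; exact Hd.
Qed.

End Contraction.

Lemma der_contraction A G Z : der (A :: A :: G) Z -> der (A :: G) Z.
Proof.
  revert G Z. induction A as [A IH] using (well_founded_ind (well_founded_ltof _ weight)).
  intros G Z H. apply (der_contraction_step A IH _ _ H), Permutation_refl.
Qed.

Lemma der_contraction_app L M Z : der (L ++ L ++ M) Z -> der (L ++ M) Z.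
Proof.
  revert M. induction L as [| a L IH]; intros M H; simpl in *; auto.
  apply der_contraction, der_Permutation with (L ++ a :: a :: M);
    [apply IH, (der_Permutation _ _ H) | ]; perm_solve.
Qed.

(* Induction on the right premise of a cut on [D]; the cases where [D] is
   principal on the right are the hypotheses. *)
Section CutRight.

Variables (D : frm2) (G : list frm2).
Hypothesis D_not_atom : forall p, D <> Atom p.
Hypothesis D_not_bot : D <> Bot.
Hypothesis cut_Land : forall X Y, D = And2 X Y ->
  forall G' Z, der (X :: Y :: G') Z -> der (G ++ G') Z.
Hypothesis cut_Lor : forall X Y, D = Or2 X Y ->
  forall G' Z, der (X :: G') Z -> der (Y :: G') Z -> der (G ++ G') Z.
Hypothesis cut_Lmimp : forall A B, D = MImp A B ->
  forall G' Z, der (G ++ G') (emb A) -> der (emb B :: G') Z -> der (G ++ G') Z.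
Hypothesis cut_LRsimp : forall C E, D = SImp C E ->
  forall A B G', der [MImp C E; emb A] (emb B) -> der (G ++ G') (SImp A B).

Lemma cut_right_induction H Z : der H Z ->
  forall G', Permutation H (D :: G') -> der (G ++ G') Z.
Proof.
  induction 1 as [p G0 D0 HP | G0 D0 Z0 HP | X Y G0 D0 Z0 HP Hd IH
    | G0 X Y Hd1 IH1 Hd2 IH2 | X Y G0 D0 Z0 HP Hd1 IH1 Hd2 IH2 | G0 X Y Hd IH
    | G0 X Y Hd IH | A B G0 D0 Z0 HP Hd1 IH1 Hd2 IH2 | A B G0 Hd IH
    | A B C E G0 D0 HP Hd | A B G0 Hd];
    intros G1 Hp.
  - specialize (D_not_atom p). apply der_id_in; in_solve.
  - apply der_Lbot_in; in_solve.
  - destruct (Permutation_cons_cases _ _ _ _ _ HP Hp) as [[e Hq] | [k [H1 H2]]].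
    + apply (cut_Land X Y); [congruence |].
      apply (der_Permutation _ _ Hd); perm_solve.
    + apply d_Land with X Y (G ++ k); [perm_solve |].
      apply der_Permutation with (G ++ X :: Y :: k); [apply IH | ]; perm_solve.
  - apply d_Rand; auto.
  - destruct (Permutation_cons_cases _ _ _ _ _ HP Hp) as [[e Hq] | [k [H1 H2]]].
    + apply (cut_Lor X Y); [congruence | |].
      * apply (der_Permutation _ _ Hd1); perm_solve.
      * apply (der_Permutation _ _ Hd2); perm_solve.
    + apply d_Lor with X Y (G ++ k); [perm_solve | |].
      * apply der_Permutation with (G ++ X :: k); [apply IH1 | ]; perm_solve.
      * apply der_Permutation with (G ++ Y :: k); [apply IH2 | ]; perm_solve.
  - apply d_Rorl; auto.
  - apply d_Rorr; auto.
  - destruct (Permutation_cons_cases _ _ _ _ _ HP Hp) as [[e Hq] | [k [H1 H2]]].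
    + apply (cut_Lmimp A B); [congruence | apply IH1; perm_solve |].
      apply (der_Permutation _ _ Hd2); perm_solve.
    + apply d_Lmimp with A B (G ++ k); [perm_solve | |].
      * apply der_Permutation with (G ++ MImp A B :: k); [apply IH1 | ]; perm_solve.
      * apply der_Permutation with (G ++ emb B :: k); [apply IH2 | ]; perm_solve.
  - apply d_Rmimp, der_Permutation with (G ++ emb A :: G1); [apply IH | ]; perm_solve.
  - destruct (Permutation_cons_cases _ _ _ _ _ HP Hp) as [[e Hq] | [k [H1 H2]]].
    + apply (cut_LRsimp C E); [congruence | exact Hd].
    + apply der_LRsimp_in with C E; [in_solve | exact Hd].
  - apply d_Rsimp; exact Hd.
Qed.

End CutRight.

Definition cut_admissible (D : frm2) : Prop :=
  forall G G' Z, der G D -> der (D :: G') Z -> der (G ++ G') Z.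

Lemma cut_And_principal X Y G G' Z :
  cut_admissible X -> cut_admissible Y ->
  der G X -> der G Y -> der (X :: Y :: G') Z -> der (G ++ G') Z.
Proof.
  intros cutX cutY HX HY H.
  apply der_contraction_app, (cutY _ (G ++ G')); [exact HY |].
  apply der_Permutation with (G ++ Y :: G'); [apply (cutX _ (Y :: G')) | ]; auto; perm_solve.
Qed.

Lemma cut_Mimp_principal A B G G' Z :
  cut_admissible (emb A) -> cut_admissible (emb B) ->
  der (emb A :: G) (emb B) -> der (G ++ G') (emb A) -> der (emb B :: G') Z ->
  der (G ++ G') Z.
Proof.
  intros cutA cutB HAB HA HB.
  assert (HGB : der ((G ++ G') ++ G) (emb B)) by exact (cutA _ _ _ HA HAB).
  specialize (cutB _ _ _ HGB HB).
  rewrite <- (app_nil_r (G ++ G')). apply der_contraction_app.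
  apply (der_Permutation _ _ cutB); perm_solve.
Qed.

Ltac cut_on_right Hr :=
  refine (cut_right_induction _ _ _ _ _ _ _ _ _ _ Hr _ (Permutation_refl _));
  try (intros; discriminate); intros ? ? e; injection e as <- <-.

Lemma cut_step G D : der G D ->
  (forall D', weight D' < weight D -> cut_admissible D') ->
  forall G' Z, der (D :: G') Z -> der (G ++ G') Z.
Proof.
  induction 1 as [p G0 D0 HP | G0 D0 Z0 HP | X Y G0 D0 Z0 HP Hd IH
    | G0 X Y Hd1 _ Hd2 _ | X Y G0 D0 Z0 HP Hd1 IH1 Hd2 IH2 | G0 X Y Hd _
    | G0 X Y Hd _ | A B G0 D0 Z0 HP Hd1 _ Hd2 IH2 | A B G0 Hd _
    | A B C E G0 D0 HP Hd | A B G0 Hd];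
    intros cut_lighter G' Z Hr; simpl in cut_lighter.
  - apply der_Permutation with (G0 ++ Atom p :: G');
      [apply der_weaken_app_l, Hr | perm_solve].
  - apply d_Lbot with (G0 ++ G'); perm_solve.
  - apply d_Land with X Y (G0 ++ G'); [perm_solve | exact (IH cut_lighter G' Z Hr)].
  - cut_on_right Hr. intros G'' Z' H.
    apply cut_And_principal with X Y; auto; apply cut_lighter; lia.
  - apply d_Lor with X Y (G0 ++ G'); [perm_solve | exact (IH1 cut_lighter G' Z Hr)
      | exact (IH2 cut_lighter G' Z Hr)].
  - cut_on_right Hr. intros G'' Z' HX _. exact (cut_lighter X ltac:(lia) _ _ _ Hd HX).
  - cut_on_right Hr. intros G'' Z' _ HY. exact (cut_lighter Y ltac:(lia) _ _ _ Hd HY).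
  - apply d_Lmimp with A B (G0 ++ G');
      [perm_solve | exact (der_weaken_app_r _ _ Hd1 G') | exact (IH2 cut_lighter G' Z Hr)].
  - cut_on_right Hr. intros G'' Z' HA HB.
    apply cut_Mimp_principal with A B; auto; apply cut_lighter; rewrite weight_emb; lia.
  - cut_on_right Hr. intros A' B' G'' HAB.
    apply d_LRsimp with C E (G0 ++ G''); [perm_solve |].
    apply (cut_lighter (MImp A B) ltac:(simpl; lia) [MImp C E] [emb A']); [| exact HAB].
    apply d_Rmimp, (der_Permutation _ _ Hd), perm_swap.
  - cut_on_right Hr. intros A' B' G'' HAB. apply d_Rsimp.
    exact (cut_lighter (MImp A B) ltac:(simpl; lia) [] [emb A'] _ (d_Rmimp _ _ _ Hd) HAB).
Qed.

Lemma cut_admissible_all D : cut_admissible D.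
Proof.
  induction D as [D IH] using (well_founded_ind (well_founded_ltof _ weight)).
  intros G G' Z HG. exact (cut_step G D HG IH G' Z).
Qed.

Theorem theorem5p3 : forall (D Z : frm2) (G G' : list frm2),
  der G D -> der (D :: G') Z -> der (G ++ G') Z.
Proof.
  intros D Z G G'. apply cut_admissible_all.
Qed.
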